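(* Let $x_0\in W^2_\infty(0,1)$ be positive with $x_0(0)>0$, let $F(x)(s)=\int_0^s x(s-t)x(t)\,dt$, and let $y^\delta=F(x_0)+\delta\xi$ where $\delta\in(0,1]$ and $\|\xi\|_\infty\le\delta$. Let $\sigma>0$ and let $m\in\mathbb{N}$ with $m\ge 1/\delta$. Let $Q_m$ be the $L_2(0,1)$-orthogonal projection onto piecewise constant functions on the equidistant partition, i.e. $[Q_m y](s)=m\int_{\Delta_i}y(t)\,dt$ for $s\in\Delta_i=[(i-1)/m,i/m)$. If $[Q_m y^\delta](\sqrt\delta)\ge0$, then $$\left|\sqrt{\tfrac{1}{\sqrt\delta}[Q_my^\delta](\sqrt\delta)}-x_0(0)\right|\le\frac{1+4\|x_0\|_{C^1(0,1)}^2}{x_0(0)}\sqrt\delta,$$ and otherwise $$|x_0(0)|\le\frac{1+4\|x_0\|_{C^1(0,1)}^2}{x_0(0)}\sqrt\delta.$$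
   Context: All functions are real-valued. $\|x\|_{C^1(0,1)}:=\max\{\|x\|_\infty,\|x'\|_\infty\}$, where $\|\cdot\|_\infty$ is the essential supremum norm. The last partition interval is taken to contain the endpoint $1$ so that $Q_my$ is defined on $[0,1]$. *)

From HB Require Import structures.
From mathcomp Require Import all_boot all_order all_algebra.
From mathcomp Require Import all_classical all_reals all_analysis.
Set Implicit Arguments. Unset Strict Implicit. Unset Printing Implicit Defensive.
Import Order.TTheory GRing.Theory Num.Theory.
Import numFieldNormedType.Exports.
Local Open Scope classical_set_scope.
Local Open Scope ring_scope.

(* R : realType. Functions on [0,1] are modelled as
   functions R -> R, only their values on [0,1] matter. *)

(* x in W^2_oo(0,1), represented by its continuous representative:
   x is continuous on [0,1], differentiable on (0,1), and x' is Lipschitz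
   (i.e. x'' exists a.e. and is essentially bounded). *)
Definition W2inf {R : realType} (x : R -> R) : Prop :=
  {within `[0, 1], continuous x} /\
  (forall t, t \in `]0, 1[ -> derivable x t 1) /\
  (exists L : R, forall s t, s \in `]0, 1[ -> t \in `]0, 1[ ->
      `|derive1 x s - derive1 x t| <= L * `|s - t|).

Definition C1norm {R : realType} (x : R -> R) : R :=
  Num.max (sup [set `|x t| | t in [set t | t \in `[0, 1]]])
          (sup [set `|derive1 x t| | t in [set t | t \in `]0, 1[]]).

Definition Fop {R : realType} (x : R -> R) (s : R) : R :=
  Rintegral lebesgue_measure [set t | t \in `[0, s]] (fun t => x (s - t) * x t).

(* index (0-based) of the partition interval containing s; the last interval
   [(m-1)/m, 1] contains the endpoint 1 *)
Definition part_index {R : realType} (m : nat) (s : R) : nat :=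
  minn (Num.truncn (s * m%:R)) m.-1.

Definition Qm {R : realType} (m : nat) (y : R -> R) (s : R) : R :=
  let k := part_index m s in
  m%:R * Rintegral lebesgue_measure
           [set t | t \in `[k%:R / m%:R, k.+1%:R / m%:R]] y.

From HB Require Import structures.
From mathcomp Require Import all_boot all_order all_algebra.
From mathcomp Require Import all_classical all_reals all_analysis.
From mathcomp Require Import ring lra measurable_realfun.
Import Order.TTheory GRing.Theory Num.Theory.
Import numFieldNormedType.Exports.
Local Open Scope classical_set_scope.
Local Open Scope ring_scope.

(** Put [u := sqrt delta] and [C := C1norm x0]; by the mean value theorem [x0]
    is bounded by [C] and [C]-Lipschitz on [0, 1].  The partition cell
    containing [u] has length [1/m <= u^2].  On it the convolution is almost
    linear, [|F x0 t - x0(0)^2 t| <= C^2 t^2], because its integrand stays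
    within [C^2 t] of [x0(0)^2] on [0, t]; together with the noise bound
    [delta |xi| <= u^4] this gives
    [|Q_m y(u) / u - x0(0)^2| <= (1 + 4 C^2) u].  Taking square roots costs a
    factor [1 / x0(0)] since [|sqrt p - a| (sqrt p + a) = |p - a^2|]; if the
    average is negative, [x0(0)^2 <= x0(0)^2 - p] gives the second bound. *)

Lemma klipschitz_continuous_within (K : realFieldType) (V W : normedModType K)
    (k : K) (A : set V) (f : V -> W) :
  k.-lipschitz_A f -> {within A, continuous f}.
Proof.
move=> flip; apply/subspace_continuousP => x Ax.
apply/cvgrPdist_le => /= e e0; rewrite near_withinE.
have k1 : 0 < `|k| + 1 by rewrite ltr_pwDr.
near=> y => Ay; apply: le_trans (flip (x, y) (conj Ax Ay)) _ => /=.
apply: le_trans (ler_wpM2r (normr_ge0 _) (ler_norm k)) _.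
apply: le_trans (_ : (`|k| + 1) * (e / (`|k| + 1)) <= e); last by rewrite mulrC divfK ?gt_eqF.
apply: ler_pM => //; first by rewrite lerDl.
near: y; apply/nbhs_normP; exists (e / (`|k| + 1)); first by rewrite /= divr_gt0.
by move=> y /= /ltW.
Unshelve. all: by end_near.
Qed.

Lemma klipschitz_measurable {R : realType} {k : R} {A : set R} {f : R -> R} :
  measurable A -> k.-lipschitz_A f -> measurable_fun A f.
Proof.
by move=> mA /klipschitz_continuous_within; apply: subspace_continuous_measurable_fun.
Qed.

Section ae_bounded_Rintegral.
Context d (T : measurableType d) (R : realType) (mu : {measure set T -> \bar R}).
Variables (D : set T) (l : R).
Hypotheses (mD : measurable D) (muD : mu D = l%:E).

Lemma ae_bounded_integrable (f : T -> R) (M : R) : measurable_fun D f ->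
  {ae mu, forall x, D x -> `|f x| <= M} -> mu.-integrable D (EFin \o f).
Proof.
move=> mf fM; apply/integrableP; split; first exact/measurable_EFinP.
apply: le_lt_trans (integral_le_bound `|M|%:E _ _ _ _) _ => //.
- exact/measurable_EFinP.
- by apply: filterS fM => x fxM Dx; rewrite lee_fin (le_trans (fxM Dx)) ?ler_norm.
- by rewrite muD -EFinM ltry.
Qed.

Lemma normr_Rintegral_le_ae (f : T -> R) (M : R) : measurable_fun D f -> 0 <= M ->
  {ae mu, forall x, D x -> `|f x| <= M} -> `|\int[mu]_(x in D) f x| <= M * l.
Proof.
move=> mf M0 fM; rewrite -lee_fin EFin_normr_Rintegral //; last exact: ae_bounded_integrable fM.
apply: le_trans (le_abse_integral _ _ _) _ => //; first exact/measurable_EFinP.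
rewrite EFinM -muD.
by apply: integral_le_bound => //; exact/measurable_EFinP.
Qed.

Lemma dist_Rintegral_cst_le_ae (f : T -> R) (c e : R) : measurable_fun D f -> 0 <= e ->
  {ae mu, forall x, D x -> `|f x - c| <= e} -> `|\int[mu]_(x in D) f x - c * l| <= e * l.
Proof.
move=> mf e0 fce.
have f_int : mu.-integrable D (EFin \o f).
  apply: (@ae_bounded_integrable _ (`|c| + e)) => //; apply: filterS fce => x fce' Dx.
  by rewrite -(subrK c (f x)) (le_trans (ler_normD _ _)) // addrC lerD2l fce'.
have c_int : mu.-integrable D (EFin \o cst c).
  by apply: (@ae_bounded_integrable _ `|c|) => //; apply: aeW.
have -> : c * l = \int[mu]_(x in D) c by rewrite Rintegral_cst // muD.
rewrite -RintegralB //; apply: normr_Rintegral_le_ae => //; exact: measurable_funB.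
Qed.
End ae_bounded_Rintegral.
Arguments ae_bounded_integrable {d T R mu D l} mD muD {f}.
Arguments normr_Rintegral_le_ae {d T R mu D l} mD muD {f}.
Arguments dist_Rintegral_cst_le_ae {d T R mu D l} mD muD {f}.

Lemma lebesgue_measure_itv_bnd {R : realType} (ba bb : bool) (a b : R) : a <= b ->
  lebesgue_measure [set` Interval (BSide ba a) (BSide bb b)] = (b - a)%:E.
Proof.
rewrite lebesgue_measure_itv /= le_eqVlt => /predU1P[->|ab].
  by rewrite subrr; case: ifP => // _; rewrite subee.
by rewrite lte_fin ab -EFinD.
Qed.

Ltac itv_lra := rewrite ?in_itv /=; repeat match goal with
  | H : is_true (_ \in Interval _ _) |- _ => rewrite in_itv /= in H; case/andP: H => ? ?
  end; try (apply/andP; split); lra.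

Section W2inf.
Context {R : realType} (x : R -> R).
Hypothesis Wx : W2inf x.

Lemma W2inf_derive1_le_C1norm t : t \in `]0, 1[ -> `|derive1 x t| <= C1norm x.
Proof.
case: Wx => _ [_ [L x'L]] t01.
have h01 : (2^-1 : R) \in `]0, 1[ by itv_lra.
have ub : has_ubound [set `|derive1 x s| | s in [set s | s \in `]0, 1[]].
  exists (`|derive1 x 2^-1| + `|L|) => _ [s /= s01 <-].
  have : `|s - 2^-1| <= 1 by rewrite ler_norml; itv_lra.
  have := x'L _ _ s01 h01; have := ler_normD (derive1 x s - derive1 x 2^-1) (derive1 x 2^-1).
  rewrite subrK; have := ler_norm L; have := normr_ge0 L; have := normr_ge0 (s - 2^-1); nra.
apply: le_trans (ub_le_sup ub _) _; first by exists t.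
by rewrite /C1norm le_max lexx orbT.
Qed.

Lemma W2inf_lipschitz : (C1norm x).-lipschitz_[set` `[0, 1]] x.
Proof.
case: Wx => x_cont [x_der _] [a b] [/= a01 b01].
wlog ab : a b a01 b01 / a <= b.
  move=> sym; case: (leP a b) => [|/ltW]; first exact: sym.
  by rewrite distrC (distrC a); apply: sym.
have [-> | a_lt_b] := eqVneq a b; first by rewrite !subrr normr0 mulr0.
have {}a_lt_b : a < b by rewrite lt_neqAle a_lt_b.
rewrite distrC (distrC a).
have [c c_ab ->] : exists2 c, c \in `]a, b[ & x b - x a = derive1 x c * (b - a).
  apply: MVT => //.
  - by move=> t tab; rewrite derive1E; apply/derivableP/x_der; itv_lra.
  - by apply: continuous_subspaceW x_cont => t /= tab; itv_lra.
rewrite normrM ler_wpM2r // W2inf_derive1_le_C1norm //; itv_lra.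
Qed.

Lemma W2inf_C1norm_ge0 : 0 <= C1norm x.
Proof.
apply: le_trans (normr_ge0 _) (W2inf_derive1_le_C1norm (2^-1) _); itv_lra.
Qed.

Lemma W2inf_le_C1norm t : t \in `[0, 1] -> `|x t| <= C1norm x.
Proof.
move=> t01; have h0 : (0 : R) \in `[0, 1] by itv_lra.
have ub : has_ubound [set `|x s| | s in [set s | s \in `[0, 1]]].
  exists (`|x 0| + C1norm x) => _ [s /= s01 <-].
  have := W2inf_lipschitz (s, 0) (conj s01 h0); rewrite /= subr0.
  have : `|s| <= 1 by rewrite ger0_norm; itv_lra.
  have := ler_normD (x s - x 0) (x 0); rewrite subrK.
  have := W2inf_C1norm_ge0; have := normr_ge0 s; nra.
apply: le_trans (ub_le_sup ub _) _; first by exists t.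
by rewrite /C1norm le_max lexx.
Qed.
End W2inf.

Lemma dist_mul_le {R : realDomainType} (a a' b b' c u v : R) :
  `|a'| <= c -> `|b| <= c -> `|a - a'| <= u -> `|b - b'| <= v ->
  `|a * b - a' * b'| <= c * u + c * v.
Proof.
move=> a'c bc aa' bb'.
have -> : a * b - a' * b' = (a - a') * b + a' * (b - b') by ring.
apply: le_trans (ler_normD _ _) _; rewrite !normrM.
have := normr_ge0 (a - a'); have := normr_ge0 a'; have := normr_ge0 b;
  have := normr_ge0 (b - b'); nra.
Qed.

Lemma sqr_add_dist_le {R : realFieldType} (t u : R) : 0 <= t <= 1 -> 0 < u <= 1 ->
  `|t - u| <= u ^+ 2 -> t ^+ 2 + `|t - u| <= 4 * u ^+ 2.
Proof.
case/andP => t0 t1 /andP[u0 u1]; case: (leP t u) => tu.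
  by rewrite ler0_norm ?subr_le0 //; nra.
by rewrite gtr0_norm ?subr_gt0 //; case: (leP u (3 / 5)); nra.
Qed.

Section convolution.
Context {R : realType} (x : R -> R) (C : R).
Hypothesis x_le : forall t, t \in `[0, 1] -> `|x t| <= C.
Hypothesis x_lip : C.-lipschitz_[set` `[0, 1]] x.
Local Notation mu := (@lebesgue_measure R).
Local Notation g s := (fun t => x (s - t) * x t).

Let mu_itv0 {s : R} : 0 <= s -> mu [set` `[0, s]] = s%:E.
Proof. by move=> s0; rewrite lebesgue_measure_itv_bnd // subr0. Qed.

Let x_dist a b : a \in `[0, 1] -> b \in `[0, 1] -> `|x a - x b| <= C * `|a - b|.
Proof. by move=> a01 b01; apply: (x_lip (a, b)). Qed.

Let x0_sqr_le : x 0 ^+ 2 <= C ^+ 2.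
Proof.
have h0 : (0 : R) \in `[0, 1] by itv_lra.
by rewrite -real_normK ?num_real // lerXn2r ?nnegrE ?x_le //; apply: le_trans (x_le _ h0).
Qed.

Let x_dist0 a : a \in `[0, 1] -> `|x a - x 0| <= C * a.
Proof.
move=> a01; have h0 : (0 : R) \in `[0, 1] by itv_lra.
by rewrite -[X in C * X]subr0 -[a - 0]ger0_norm ?x_dist //; itv_lra.
Qed.

Lemma conv_integrand_le (s t : R) : t \in `[0, s] -> s <= 1 -> `|x (s - t) * x t| <= C ^+ 2.
Proof. by move=> ts s1; rewrite normrM expr2 ler_pM // x_le //; itv_lra. Qed.

Lemma conv_integrand_lipschitz (s : R) : s <= 1 ->
  (2 * C ^+ 2).-lipschitz_[set` `[0, s]] (g s).
Proof.
move=> s1 [t t'] [/= ts t's].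
have -> : 2 * C ^+ 2 * `|t - t'| = C * (C * `|t - t'|) + C * (C * `|t - t'|) by ring.
apply: dist_mul_le; rewrite ?x_le ?x_dist //; try itv_lra.
have -> : `|t - t'| = `|(s - t) - (s - t')| by rewrite distrC; congr `|_|; ring.
apply: x_dist; itv_lra.
Qed.

Lemma measurable_conv_integrand (s : R) (I : interval R) : s <= 1 ->
  [set` I] `<=` [set` `[0, s]] -> measurable_fun [set` I] (g s).
Proof.
move=> s1 Is; apply: (measurable_funS _ Is).
- exact: measurable_itv.
- exact: klipschitz_measurable (measurable_itv _) (conv_integrand_lipschitz _ s1).
Qed.

Lemma integrable_conv_integrand (s r : R) : 0 <= r -> r <= s -> s <= 1 ->
  mu.-integrable [set` `[0, r]] (EFin \o g s).
Proof.
move=> r0 rs s1; apply: (ae_bounded_integrable _ _ (C ^+ 2)).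
- exact: measurable_itv.
- exact: mu_itv0.
- by apply: measurable_conv_integrand => // t /=; itv_lra.
- by apply: aeW => t /= tr; apply: conv_integrand_le => //; itv_lra.
Qed.

Lemma dist_Fop_linear_le (s : R) : 0 <= s <= 1 ->
  `|Fop x s - x 0 ^+ 2 * s| <= C ^+ 2 * s ^+ 2.
Proof.
case/andP => s0 s1.
rewrite [s ^+ 2]expr2 mulrA.
apply: (dist_Rintegral_cst_le_ae _ (mu_itv0 s0)).
- exact: measurable_itv.
- exact: measurable_conv_integrand.
- by rewrite mulr_ge0 ?sqr_ge0.
- apply: aeW => t /= ts.
  have -> : C ^+ 2 * s = C * (C * (s - t)) + C * (C * t) by ring.
  by rewrite expr2; apply: dist_mul_le; rewrite ?x_le ?x_dist0 //; itv_lra.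
Qed.

Lemma Fop_subE (s s' : R) : 0 <= s -> s <= s' -> s' <= 1 ->
  Fop x s' - Fop x s = \int[mu]_(t in [set` `]s, s']]) g s' t
                       + \int[mu]_(t in [set` `[0, s]]) (g s' t - g s t).
Proof.
move=> s0 ss' s'1; have s'0 := le_trans s0 ss'.
rewrite -(@Rintegral_itvB _ _ (BLeft 0) (BRight s') s) ?bnd_simp //; last first.
  exact: integrable_conv_integrand s'0 (lexx s') s'1.
rewrite RintegralB; [by rewrite /Fop; ring | exact: measurable_itv | |].
- exact: integrable_conv_integrand s0 ss' s'1.
- exact: integrable_conv_integrand s0 (lexx s) (le_trans ss' s'1).
Qed.


Lemma Fop_sub_le (s s' : R) : 0 <= s -> s <= s' -> s' <= 1 ->
  `|Fop x s' - Fop x s| <= 2 * C ^+ 2 * (s' - s).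
Proof.
move=> s0 ss' s'1; rewrite Fop_subE //.
have tail_le : `|\int[mu]_(t in [set` `]s, s']]) g s' t| <= C ^+ 2 * (s' - s).
  apply: (normr_Rintegral_le_ae _ _).
  - exact: measurable_itv.
  - exact: lebesgue_measure_itv_bnd.
  - by apply: measurable_conv_integrand => // t /=; itv_lra.
  - exact: sqr_ge0.
  - by apply: aeW => t /= ts; apply: conv_integrand_le => //; itv_lra.
have shift_le : `|\int[mu]_(t in [set` `[0, s]]) (g s' t - g s t)| <= C ^+ 2 * (s' - s).
  apply: (@le_trans _ _ (C ^+ 2 * (s' - s) * s)); last first.
    have : 0 <= C ^+ 2 * (s' - s) by apply: mulr_ge0; [exact: sqr_ge0 | lra].
    nra.
  apply: (normr_Rintegral_le_ae _ (mu_itv0 s0)).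
  - exact: measurable_itv.
  - by apply: measurable_funB; apply: measurable_conv_integrand; try lra; move=> t /=; itv_lra.
  - by apply: mulr_ge0; [exact: sqr_ge0 | lra].
  - apply: aeW => t /= ts.
    have -> : C ^+ 2 * (s' - s) = C * (C * (s' - s)) + C * 0 by ring.
    apply: dist_mul_le; rewrite ?subrr ?normr0 ?x_le //; try itv_lra.
    apply: le_trans (x_dist _ _ _ _) _; try itv_lra.
    by rewrite opprB addrA subrK ger0_norm ?subr_ge0.
have -> : 2 * C ^+ 2 * (s' - s) = C ^+ 2 * (s' - s) + C ^+ 2 * (s' - s) by ring.
exact: le_trans (ler_normD _ _) (lerD tail_le shift_le).
Qed.

Lemma Fop_lipschitz : (2 * C ^+ 2).-lipschitz_[set` `[0, 1]] (Fop x).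
Proof.
move=> [s s'] [/= s01 s'01].
wlog ss' : s s' s01 s'01 / s <= s'.
  move=> sym; case: (leP s s') => [|/ltW]; first exact: sym.
  by rewrite distrC (distrC s); apply: sym.
rewrite distrC (distrC s) (@ger0_norm _ (s' - s)) ?subr_ge0 //.
apply: Fop_sub_le => //; itv_lra.
Qed.

Lemma dist_noisy_Fop_le (t u n : R) : 0 <= t <= 1 -> 0 < u <= 1 ->
  `|t - u| <= u ^+ 2 -> `|n| <= u ^+ 4 ->
  `|Fop x t + n - u * x 0 ^+ 2| <= 4 * C ^+ 2 * u ^+ 2 + u ^+ 4.
Proof.
move=> t01 u01 tu n_le.
have F_le := dist_Fop_linear_le _ t01.
have quad_le := ler_wpM2l (sqr_ge0 C) (sqr_add_dist_le _ _ t01 u01 tu).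
have lin_le : `|x 0 ^+ 2 * (t - u)| <= C ^+ 2 * `|t - u|.
  by rewrite normrM ger0_norm ?sqr_ge0 // ler_wpM2r.
have -> : Fop x t + n - u * x 0 ^+ 2 = (Fop x t - x 0 ^+ 2 * t) + x 0 ^+ 2 * (t - u) + n.
  by ring.
have := ler_normD (Fop x t - x 0 ^+ 2 * t + x 0 ^+ 2 * (t - u)) n.
have := ler_normD (Fop x t - x 0 ^+ 2 * t) (x 0 ^+ 2 * (t - u)).
lra.
Qed.
End convolution.

Section partition.
Context {R : realType} (m : nat).
Hypothesis m_gt0 : (0 < m)%N.
Local Notation cell u :=
  `[(part_index m u)%:R / m%:R, (part_index m u).+1%:R / m%:R].

Lemma part_index_lt (u : R) : (part_index m u < m)%N.
Proof. by rewrite /part_index (leq_ltn_trans (geq_minr _ _)) // prednK. Qed.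

Lemma mem_part_cell (u : R) : u \in `[0, 1] -> u \in cell u.
Proof.
move=> u01; have m0 : (0 : R) < m%:R by rewrite ltr0n.
have u0 : 0 <= u by itv_lra.
rewrite /part_index; set n := Num.truncn (u * m%:R).
have /andP[nu un] := truncn_itv (mulr_ge0 u0 (ler0n R m)).
rewrite in_itv /=; case: (leqP n m.-1) => [nm | mn].
  by rewrite ler_pdivrMr // ler_pdivlMr // nu ltW.
rewrite prednK //.
have u1 : u = 1.
  apply/eqP; rewrite eq_le; apply/andP; split; first by itv_lra.
  by rewrite -(ler_pM2r m0) mul1r (le_trans _ nu) // ler_nat; move: mn; rewrite prednK.
by rewrite u1 divff ?gt_eqF // lexx ler_pdivrMr // mul1r ler_nat leq_pred.
Qed.

Lemma dist_Qm_le_ae (y : R -> R) (u c e : R) : u \in `[0, 1] ->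
  measurable_fun ([set` `[0, 1]] : set R) y -> 0 <= e ->
  {ae lebesgue_measure, forall t, t \in `[0, 1] -> `|t - u| <= m%:R^-1 -> `|y t - c| <= e} ->
  `|Qm m y u - c| <= e.
Proof.
move=> u01 my e0 yce; have m0 : (0 : R) < m%:R by rewrite ltr0n.
have ucell := mem_part_cell _ u01.
have km := part_index_lt u.
have len : (part_index m u).+1%:R / m%:R - (part_index m u)%:R / m%:R = m%:R^-1 :> R.
  by rewrite -natr1 mulrDl addrAC subrr add0r mul1r.
have cell0 : (0 : R) <= (part_index m u)%:R / m%:R by rewrite divr_ge0.
have cell1 : ((part_index m u).+1%:R / m%:R : R) <= 1.
  by rewrite ler_pdivrMr // mul1r ler_nat.
have int_le : `|\int[lebesgue_measure]_(t in [set` cell u]) y t - c * m%:R^-1| <= e * m%:R^-1.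
  apply: (dist_Rintegral_cst_le_ae _ _).
  - exact: measurable_itv.
  - by rewrite -[in RHS]len; apply: lebesgue_measure_itv_bnd; itv_lra.
  - by apply: measurable_funS my => // t /=; itv_lra.
  - exact: e0.
  - apply: filterS yce; first exact: (ae_filter_ringOfSetsType lebesgue_measure).
    move=> t yt /= tcell; apply: yt; first by itv_lra.
    by rewrite ler_norml; itv_lra.
have -> : Qm m y u - c = m%:R * (\int[lebesgue_measure]_(t in [set` cell u]) y t - c * m%:R^-1).
  by rewrite /Qm /= mulrBr mulrCA divff ?gt_eqF // mulr1.
rewrite normrM ger0_norm ?ler0n // -ler_pdivlMl // [_ * e]mulrC.
exact: int_le.
Qed.
End partition.

Lemma dist_sqrtr_le {R : rcfType} (p a e : R) : 0 < a -> `|p - a ^+ 2| <= e ->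
  (0 <= p -> `|Num.sqrt p - a| <= e / a) /\ (p < 0 -> a <= e / a).
Proof.
move=> a0 pa; rewrite !ler_pdivlMr //; split => [p0 | /ltW p0]; last first.
  by move: pa; rewrite ler_norml; nra.
have r0 := sqrtr_ge0 p; have rr := sqr_sqrtr p0.
move: (Num.sqrt p) r0 rr => r r0 rr.
have e1 : `|r - a| * (r + a) = `|p - a ^+ 2|.
  by rewrite -(ger0_norm (addr_ge0 r0 (ltW a0))) -normrM -rr; congr `|_|; ring.
have := normr_ge0 (r - a); nra.
Qed.

Lemma dist_Qm_noisy_Fop_le {R : realType} {x xi : R -> R} {C delta : R} {m : nat} :
  (forall t, t \in `[0, 1] -> `|x t| <= C) -> C.-lipschitz_[set` `[0, 1]] x ->
  0 < delta -> delta <= 1 ->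
  measurable_fun ([set` `[0, 1]] : set R) xi ->
  {ae lebesgue_measure, forall t : R, t \in `[0, 1] -> `|xi t| <= delta} ->
  1 / delta <= m%:R ->
  `|Qm m (fun s => Fop x s + delta * xi s) (Num.sqrt delta) / Num.sqrt delta - x 0 ^+ 2|
    <= (1 + 4 * C ^+ 2) * Num.sqrt delta.
Proof.
move=> x_le x_lip d0 d1 mxi xi_le md.
set u := Num.sqrt delta.
have u0 : 0 < u by rewrite sqrtr_gt0.
have uu : u ^+ 2 = delta by rewrite sqr_sqrtr ?ltW.
have u1 : u <= 1 by nra.
have m0 : 0 < m%:R :> R by apply: lt_le_trans md; rewrite divr_gt0.
have md' : m%:R^-1 <= delta by rewrite -div1r ler_pdivrMr // mulrC -ler_pdivrMr.
have hq : `|Qm m (fun s => Fop x s + delta * xi s) u - u * x 0 ^+ 2|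
    <= 4 * C ^+ 2 * u ^+ 2 + u ^+ 4.
  apply: dist_Qm_le_ae; first by rewrite -(ltr0n R).
  - by itv_lra.
  - apply: measurable_funD; last by apply: measurable_funM => //; exact: measurable_cst.
    by apply: (klipschitz_measurable _ (Fop_lipschitz _ _ x_le x_lip)); exact: measurable_itv.
  - have := sqr_ge0 C; have := sqr_ge0 u; have := exprn_ge0 4 (ltW u0); nra.
  apply: filterS xi_le; first exact: (ae_filter_ringOfSetsType lebesgue_measure).
  move=> t xi_le t01 tu; apply: dist_noisy_Fop_le x_le x_lip _ _ _ _ _ _ _; try itv_lra.
  rewrite normrM (ger0_norm (ltW d0)) (_ : 4 = 2 + 2)%N // exprD uu.
  by have := xi_le t01; have := normr_ge0 (xi t); nra.
set Q := Qm m _ u in hq *.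
have -> : Q / u - x 0 ^+ 2 = (Q - u * x 0 ^+ 2) / u by field; rewrite gt_eqF.
rewrite normf_div (gtr0_norm u0) ler_pdivrMr //; apply: le_trans hq _.
have := sqr_ge0 C; nra.
Qed.

Theorem proposition2p11 (R : realType) (x0 xi : R -> R) (delta sigma : R) (m : nat) :
  W2inf x0 ->
  (forall t, t \in `[0, 1] -> 0 <= x0 t) ->
  0 < x0 0 ->
  0 < delta -> delta <= 1 ->
  measurable_fun (`[0, 1]%classic : set R) xi ->
  {ae (@lebesgue_measure R), forall t : R, t \in `[0, 1] -> `|xi t| <= delta} ->
  0 < sigma ->
  1 / delta <= m%:R ->
  let ydelta := fun s => Fop x0 s + delta * xi s in
  let q := Qm m ydelta (Num.sqrt delta) in
  let bound := (1 + 4 * C1norm x0 ^+ 2) / x0 0 * Num.sqrt delta in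
  (0 <= q -> `|Num.sqrt (q / Num.sqrt delta) - x0 0| <= bound) /\
  (q < 0 -> `|x0 0| <= bound).
Proof.
move=> Wx _ x00 d0 d1 mxi xi_le _ m_ge ydelta q bound.
have u0 : 0 < Num.sqrt delta by rewrite sqrtr_gt0.
have hq := dist_Qm_noisy_Fop_le (W2inf_le_C1norm _ Wx) (W2inf_lipschitz _ Wx) d0 d1 mxi xi_le m_ge.
have [sqrt_case neg_case] := dist_sqrtr_le _ _ _ x00 hq.
rewrite /bound [_ / x0 0 * _]mulrAC (ger0_norm (ltW x00)); split => [q0 | q_lt0].
- by apply: sqrt_case; rewrite divr_ge0 // ltW.
- by apply: neg_case; rewrite pmulr_llt0 ?invr_gt0.
Qed.
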